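(* Fix an integer $m\ge 3$ and a finite complete graph $K$ on at least $m$ vertices. Set \[ \mathcal{O}=\max_{\nu\in\Delta^K}\bigl(2m\cdot\beta(\nu;C_m)+\beta(\nu;P_{m+1})\bigr). \] If $\mu\in\Delta^K$ achieves $\mathcal{O}$, then for all $x\in V(K)$, \[ \frac{m}{2}\bar\mu(x)+\bigl(1-\bar\mu(x)\bigr)^m+\frac{1}{2\mathcal{O}}\cdot\bar\mu(x)\Bigl(\frac{1-\bar\mu(x)}{m-1}\Bigr)^{m-1}\ge 1. \]
   Context: $C_m$ is the cycle on $m$ vertices and $P_{m+1}$ the path on $m+1$ vertices. $\Delta^K$ is the set of probability measures on $E(K)$. For $\mu\in\Delta^K$ and a subgraph $H'\subseteq K$, $\mu(H')=\prod_{e\in E(H')}\mu(e)$; $\beta(\mu;H)=\sum_{H'}\mu(H')$ over all subgraphs $H'$ of $K$ isomorphic to $H$; and $\bar\mu(x)=\sum_{y\in V(K)\setminus\{x\}}\mu(xy)$. *)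

From HB Require Import structures.
From mathcomp Require Import all_boot all_order all_algebra.
From mathcomp Require Import reals.
Set Implicit Arguments. Unset Strict Implicit. Unset Printing Implicit Defensive.
Import Order.TTheory GRing.Theory Num.Theory.
Local Open Scope ring_scope.

(* The complete graph K on the finite vertex type V: its edges are the
   2-element subsets of V. A weight function assigns a real to each set of
   vertices; only its values on edges matter. *)
Definition is_edge (V : finType) (e : {set V}) : bool := #|e| == 2%N.

Definition in_simplex (R : realType) (V : finType) (mu : {set V} -> R) : Prop :=
  (forall e : {set V}, is_edge e -> 0 <= mu e) /\
  \sum_(e : {set V} | is_edge e) mu e = 1.

(* mu(H') = product of mu over edges of H' (H' given by its edge set). *)
Definition wt (R : realType) (V : finType) (mu : {set V} -> R)
  (F : {set {set V}}) : R := \prod_(e in F) mu e.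

Definition is_cycle_edges (V : finType) (m : nat) (F : {set {set V}}) : bool :=
  [exists c : {ffun 'I_m -> V}, injectiveb c &&
     (F == [set [set c i; c (ordS i)] | i : 'I_m])].

Definition is_path_edges (V : finType) (m : nat) (F : {set {set V}}) : bool :=
  [exists p : {ffun 'I_m.+1 -> V}, injectiveb p &&
     (F == [set [set p (widen_ord (leqnSn m) i); p (lift ord0 i)] | i : 'I_m])].

Definition beta_cycle (R : realType) (V : finType) (m : nat)
  (mu : {set V} -> R) : R :=
  \sum_(F : {set {set V}} | is_cycle_edges m F) wt mu F.

Definition beta_path (R : realType) (V : finType) (m : nat)
  (mu : {set V} -> R) : R :=
  \sum_(F : {set {set V}} | is_path_edges m F) wt mu F.

Definition objective (R : realType) (V : finType) (m : nat)
  (nu : {set V} -> R) : R :=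
  (2 * m)%:R * beta_cycle m nu + beta_path m nu.

Definition mubar (R : realType) (V : finType) (mu : {set V} -> R) (x : V) : R :=
  \sum_(y : V | y != x) mu [set x; y].

From HB Require Import structures.
From mathcomp Require Import all_boot all_order all_algebra.
From mathcomp Require Import reals.
From mathcomp Require Import ring lra zify.
Import Order.TTheory GRing.Theory Num.Theory.
Set Implicit Arguments. Unset Strict Implicit. Unset Printing Implicit Defensive.
Local Open Scope ring_scope.

(* Write the objective as O = sum_F c_F mu(F) over the edge sets F of m-cycles
   and of paths with m edges, and let d(F) be the number of edges of F at x;
   put b = mubar(x).  Comparing mu with two competitors gives
   - (edges at x removed, the others scaled by 1/(1-b)) the subgraphs with
     d(F) = 0 carry at most (1-b)^m O;
   - (edges at x scaled by 1 + t(1-b), the others by 1 - tb, t -> 0)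
     sum_F c_F mu(F) d(F) <= m b O.
   Since 1 <= [d = 0] + d/2 + [d = 1]/2, and cycles never have d = 1, this gives
   O <= (1-b)^m O + m b O/2 + E/2 with E the weight of the paths having x as an
   endpoint.  Growing such a path from x one edge at a time and applying AM-GM,
   E <= b ((1-b)/(m-1))^(m-1): the first edge is one of the edges at x, of total
   weight b, and the others avoid x, whose edges have total weight 1-b. *)

Section RealDomainInequalities.
Variable R : realDomainType.

Lemma sub_ler_sum (I : finType) (P Q : pred I) (f : I -> R) :
  (forall i, P i -> Q i) -> (forall i, Q i -> 0 <= f i) ->
  \sum_(i | P i) f i <= \sum_(i | Q i) f i.
Proof.
move=> PQ f_ge0; rewrite [X in _ <= X](bigID P) /=.
rewrite (eq_bigl P) => [|i]; last by case Pi: (P i); rewrite ?andbT ?andbF ?PQ.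
by rewrite lerDl; apply: sumr_ge0 => i /andP[/f_ge0].
Qed.

Lemma bernoulli_ineq (x : R) n : -1 <= x -> 1 + n%:R * x <= (1 + x) ^+ n.
Proof.
move=> x_ge; elim: n => [|n IHn]; first by rewrite mul0r addr0 expr0.
have x1_ge0 : 0 <= 1 + x by lra.
rewrite exprS; apply: le_trans (ler_wpM2l x1_ge0 IHn).
have : 0 <= n%:R * x ^+ 2 :> R by rewrite mulr_ge0 ?ler0n ?sqr_ge0.
by rewrite -natr1; nra.
Qed.

Lemma bernoulli_mul_ineq (u w : R) d k : 0 <= u -> 0 <= w <= 1 ->
  (1 + d%:R * u) * (1 - k%:R * w) <= (1 + u) ^+ d * (1 - w) ^+ k.
Proof.
move=> u_ge0 /andP[w_ge0 w_le1].
have up : 1 + d%:R * u <= (1 + u) ^+ d by apply: bernoulli_ineq; lra.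
have wp : 1 - k%:R * w <= (1 - w) ^+ k.
  by rewrite -mulrN; apply: bernoulli_ineq; lra.
apply: le_trans (_ : (1 + d%:R * u) * (1 - w) ^+ k <= _).
  by rewrite ler_wpM2l // addr_ge0 ?mulr_ge0 ?ler0n.
by rewrite ler_wpM2r // exprn_ge0 // subr_ge0.
Qed.

End RealDomainInequalities.

Section RealFieldInequalities.
Variable R : realFieldType.

Lemma le0_of_small_mul_ub (t0 M L : R) : 0 < t0 -> 0 <= M ->
  (forall t, 0 < t -> t <= t0 -> L <= t * M) -> L <= 0.
Proof.
move=> t0_gt0 M_ge0 ub; rewrite leNgt; apply/negP => L_gt0.
pose t := Order.min t0 (L / (M + 1)).
have M1_gt0 : 0 < M + 1 by lra.
have t_gt0 : 0 < t by rewrite lt_min t0_gt0 divr_gt0.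
have : t * (M + 1) <= L by rewrite -ler_pdivlMr // ge_min lexx orbT.
have t_le_t0 : t <= t0 by rewrite ge_min lexx.
by have := ub t t_gt0 t_le_t0; nra.
Qed.

Lemma AGM_step (a c : R) k : 0 <= a -> 0 <= c ->
  a * (c / k%:R) ^+ k <= ((a + c) / k.+1%:R) ^+ k.+1.
Proof.
move=> a_ge0 c_ge0; case: k => [|k]; first by rewrite expr0 mulr1 expr1 divr1; lra.
pose E (i : 'I_k.+2) := if i == ord0 then a else c / k.+1%:R.
have E_ge0 : {in predT, forall i, 0 <= E i}.
  by move=> i _; rewrite /E; case: eqP => // _; rewrite divr_ge0 ?ler0n.
have sumE : \sum_(i in predT) E i = a + c.
  rewrite (eq_bigl xpredT) // big_ord_recl /E /= sumr_const card_ord.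
  by rewrite -[c / _ *+ _]mulr_natr divfK // pnatr_eq0.
have := (leif_AGM E_ge0).1; rewrite /= sumE cardT size_enum_ord.
by rewrite big_ord_recl /E /= prodr_const card_ord.
Qed.

End RealFieldInequalities.

Lemma ordS_neq m (i : 'I_m) : (2 <= m)%N -> ordS i != i.
Proof.
move=> m_ge2; apply/eqP => /(congr1 val) /=; have := ltn_ord i.
case: (ltngtP i.+1 m) => [lt_im|//|eq_im]; first by rewrite modn_small //; lia.
by rewrite eq_im modnn; lia.
Qed.

Lemma ordSS_neq m (i : 'I_m) : (3 <= m)%N -> ordS (ordS i) != i.
Proof.
move=> m_ge3; apply/eqP => /(congr1 val) /=; have := ltn_ord i.
case: (ltngtP i.+1 m) => [lt_im|//|eq_im]; last by rewrite eq_im modnn modn_small; lia.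
rewrite (modn_small lt_im); case: (ltngtP i.+2 m) => [lt_i2m|gt_i2m|eq_i2m].
- by rewrite modn_small //; lia.
- lia.
- by rewrite eq_i2m modnn; lia.
Qed.

Lemma set2_eq_mem (V : finType) (a b c d : V) :
  [set a; b] = [set c; d] -> (a == c) || (a == d).
Proof. by move=> abcd; have := set21 a b; rewrite abcd in_set2. Qed.

Definition deg (V : finType) (x : V) (F : {set {set V}}) : nat :=
  #|[set e in F | x \in e]|.

Lemma deg_le_card (V : finType) (x : V) F : (deg x F <= #|F|)%N.
Proof. by apply/subset_leq_card/subsetP => e; rewrite inE => /andP[]. Qed.

Lemma two_le_deg (V : finType) (x : V) (F : {set {set V}}) e1 e2 :
  e1 \in F -> e2 \in F -> x \in e1 -> x \in e2 -> e1 != e2 -> (2 <= deg x F)%N.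
Proof.
move=> e1F e2F xe1 xe2 e12; have <- : #|[set e1; e2]| = 2%N by rewrite cards2 e12.
by apply/subset_leq_card/subsetP => e; rewrite in_set2 inE => /orP[]/eqP->;
  rewrite ?e1F ?e2F.
Qed.

Section CycleEdges.
Variables (V : finType) (m : nat) (c : 'I_m -> V).
Hypotheses (m_ge3 : (3 <= m)%N) (c_inj : injective c).

Definition cycle_edge (i : 'I_m) : {set V} := [set c i; c (ordS i)].

Lemma cycle_edge_is_edge i : is_edge (cycle_edge i).
Proof.
by rewrite /is_edge cards2 (inj_eq c_inj) (eq_sym i) (ordS_neq _ (ltnW m_ge3)).
Qed.

Lemma cycle_edge_inj : injective cycle_edge.
Proof.
move=> i j eij; have := set2_eq_mem eij; rewrite !(inj_eq c_inj).
case/orP=> /eqP // ij; subst i.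
have := set22 (c (ordS j)) (c (ordS (ordS j))).
rewrite /cycle_edge in eij; rewrite eij in_set2 !(inj_eq c_inj).
by rewrite (negbTE (ordSS_neq _ m_ge3)) (inj_eq (@ordS_inj _))
  (negbTE (ordS_neq _ (ltnW m_ge3))).
Qed.

Lemma card_cycle_edges : #|[set cycle_edge i | i : 'I_m]| = m.
Proof. by rewrite card_imset ?card_ord //; exact: cycle_edge_inj. Qed.

Lemma deg_cycle_neq1 x : deg x [set cycle_edge i | i : 'I_m] != 1%N.
Proof.
apply/eqP => deg1; have : (0 < deg x [set cycle_edge i | i : 'I_m])%N by rewrite deg1.
rewrite card_gt0 => /set0Pn[e]; rewrite inE => /andP[/imsetP[i _ ->]] xe.
have [j xj] : exists j, x = c j by move: xe; rewrite in_set2 => /orP[]/eqP->; eexists.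
subst x.
suff: (2 <= deg (c j) [set cycle_edge i | i : 'I_m])%N by rewrite deg1.
apply: (two_le_deg (e1 := cycle_edge j) (e2 := cycle_edge (ord_pred j)));
  rewrite ?imset_f ?in_set2 ?ord_predK ?eqxx ?orbT //.
rewrite (inj_eq cycle_edge_inj); apply: contraTneq (ordS_neq j (ltnW m_ge3)).
by move=> {1}->; rewrite ord_predK eqxx.
Qed.

End CycleEdges.

Definition path_edge (V : finType) m (p : 'I_m.+1 -> V) (i : 'I_m) : {set V} :=
  [set p (widen_ord (leqnSn m) i); p (lift ord0 i)].

Section PathEdges.
Variables (V : finType) (m : nat) (p : 'I_m.+1 -> V).
Hypothesis p_inj : injective p.

Lemma path_edge_is_edge i : is_edge (path_edge p i).
Proof.
rewrite /is_edge cards2 (inj_eq p_inj).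
suff -> : widen_ord (leqnSn m) i != lift ord0 i by [].
by apply/eqP => /(congr1 val) /=; rewrite /bump /=; lia.
Qed.

Lemma path_edge_inj : injective (path_edge p).
Proof.
move=> i j eij; have := set2_eq_mem eij; have := set2_eq_mem (esym eij).
have := set2_eq_mem (etrans (setUC _ _) (etrans eij (setUC _ _))).
rewrite !(inj_eq p_inj) => /orP[]/eqP/(congr1 val) e1 /orP[]/eqP/(congr1 val) e2
  /orP[]/eqP/(congr1 val) e3;
  rewrite /= /bump /= in e1 e2 e3; apply/val_inj => /=; lia.
Qed.

Lemma card_path_edges : #|[set path_edge p i | i : 'I_m]| = m.
Proof. by rewrite card_imset ?card_ord //; exact: path_edge_inj. Qed.

Lemma deg_path_inner (k : 'I_m.+1) : (0 < k < m)%N ->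
  (2 <= deg (p k) [set path_edge p i | i : 'I_m])%N.
Proof.
move=> /andP[k_gt0 k_lt_m].
pose i1 : 'I_m := Ordinal (leq_ltn_trans (leq_pred k) k_lt_m).
pose i2 : 'I_m := Ordinal k_lt_m.
have lift_i1 : lift ord0 i1 = k by apply/val_inj; rewrite /= /bump /=; lia.
have widen_i2 : widen_ord (leqnSn m) i2 = k by apply/val_inj.
have e12 : path_edge p i1 != path_edge p i2.
  by rewrite (inj_eq path_edge_inj); apply/eqP => /(congr1 val) /=; lia.
apply: (two_le_deg _ _ _ _ e12); rewrite ?imset_f //.
  by rewrite /path_edge lift_i1 in_set2 eqxx orbT.
by rewrite /path_edge widen_i2 in_set2 eqxx.
Qed.

Definition rev_path : {ffun 'I_m.+1 -> V} := [ffun i => p (rev_ord i)].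

Lemma rev_path_inj : injective rev_path.
Proof. by move=> i j; rewrite !ffunE => /p_inj/rev_ord_inj. Qed.

Lemma rev_path_edges :
  [set path_edge rev_path i | i : 'I_m] = [set path_edge p i | i : 'I_m].
Proof.
have revE i : path_edge rev_path i = path_edge p (rev_ord i).
  rewrite /path_edge /rev_path !ffunE setUC; congr [set p _; p _]; apply/val_inj => /=;
    rewrite /bump /=; have := ltn_ord i; lia.
apply/setP => e; apply/imsetP/imsetP => -[i _ ->]; exists (rev_ord i) => //.
by rewrite revE rev_ordK.
Qed.

End PathEdges.

Lemma path_from_leaf (V : finType) m (F : {set {set V}}) x :
  is_path_edges m F -> deg x F = 1%N ->
  exists2 q : {ffun 'I_m.+1 -> V}, injective q &
    q ord0 = x /\ F = [set path_edge q i | i : 'I_m].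
Proof.
move=> /existsP[p /andP[/injectiveP p_inj /eqP ->]] deg1.
have : (0 < deg x [set path_edge p i | i : 'I_m])%N by rewrite deg1.
rewrite card_gt0 => /set0Pn[e]; rewrite inE => /andP[/imsetP[i _ ->]] xe.
have [k xk] : exists k, x = p k.
  by move: xe; rewrite in_set2 => /orP[]/eqP->; eexists.
subst x; case: (posnP k) => [k0|k_gt0].
  by exists p => //; split=> //; congr (p _); apply/val_inj.
case: (ltnP k m) => [k_lt_m|k_ge_m].
  by have := deg_path_inner p_inj (k := k); rewrite deg1 k_gt0 k_lt_m => /(_ isT).
exists (rev_path p); first exact: rev_path_inj.
split; last by rewrite rev_path_edges.
by rewrite /rev_path ffunE; congr (p _); apply/val_inj => /=; have := ltn_ord k; lia.
Qed.

Lemma deg_cycle_edges_neq1 (V : finType) m (F : {set {set V}}) x :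
  (3 <= m)%N -> is_cycle_edges m F -> deg x F != 1%N.
Proof.
by move=> m_ge3 /existsP[c /andP[/injectiveP c_inj /eqP->]]; exact: deg_cycle_neq1.
Qed.

Section PathSums.
Variables (R : realFieldType) (V : finType) (mu : {set V} -> R).
Hypothesis mu_ge0 : forall e, is_edge e -> 0 <= mu e.
Implicit Types (A : {set V}) (v w : V).

Definition path_sum k (v : V) (A : {set V}) : R :=
  \sum_(p : {ffun 'I_k.+1 -> V} | [&& p ord0 == v, injectiveb p & [forall i, p i \notin A]])
    \prod_(i < k) mu (path_edge p i).

Definition edge_mass (A : {set V}) : R :=
  \sum_(e | is_edge e && [forall u in e, u \notin A]) mu e.

Lemma is_edge_set2 (v w : V) : w != v -> is_edge [set v; w].
Proof. by rewrite /is_edge cards2 eq_sym => ->. Qed.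

Lemma prod_path_edge_ge0 k (p : 'I_k.+1 -> V) : injective p ->
  0 <= \prod_(i < k) mu (path_edge p i).
Proof. by move=> p_inj; apply: prodr_ge0 => i _; apply/mu_ge0/path_edge_is_edge. Qed.

Lemma edge_mass_ge0 A : 0 <= edge_mass A.
Proof. by apply: sumr_ge0 => e /andP[/mu_ge0]. Qed.

Lemma path_sum0_le1 v A : path_sum 0 v A <= 1.
Proof.
rewrite /path_sum; under eq_bigr do rewrite big_ord0.
rewrite sumr_const; set n := #|_|.
suff : (n <= 1)%N by rewrite -(ler_nat R).
rewrite -(card1 ([ffun=> v] : {ffun 'I_1 -> V})).
apply/subset_leq_card/subsetP => p; rewrite !inE => /and3P[/eqP p0 _ _].
by apply/eqP/ffunP => i; rewrite ffunE (ord1 i).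
Qed.

Definition cons_path k (v : V) (q : {ffun 'I_k.+1 -> V}) : {ffun 'I_k.+2 -> V} :=
  [ffun i => if unlift ord0 i is Some j then q j else v].

Lemma cons_path0 k v (q : {ffun 'I_k.+1 -> V}) : cons_path v q ord0 = v.
Proof. by rewrite ffunE unlift_none. Qed.

Lemma cons_pathS k v (q : {ffun 'I_k.+1 -> V}) j : cons_path v q (lift ord0 j) = q j.
Proof. by rewrite ffunE liftK. Qed.

Lemma cons_pathK k v (p : {ffun 'I_k.+2 -> V}) :
  p ord0 = v -> cons_path v [ffun j => p (lift ord0 j)] = p.
Proof.
move=> p0; apply/ffunP => i; rewrite ffunE.
by case: unliftP => [j ->|->]; rewrite ?ffunE.
Qed.

Lemma prod_path_edge_cons k v (q : {ffun 'I_k.+1 -> V}) :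
  \prod_(i < k.+1) mu (path_edge (cons_path v q) i) =
  mu [set v; q ord0] * \prod_(i < k) mu (path_edge q i).
Proof.
rewrite big_ord_recl /path_edge; congr (mu _ * _).
  have -> : widen_ord (leqnSn k.+1) ord0 = ord0 by exact/val_inj.
  by rewrite cons_path0 cons_pathS.
apply: eq_bigr => i _.
have -> : widen_ord (leqnSn k.+1) (lift ord0 i) = lift ord0 (widen_ord (leqnSn k) i).
  exact/val_inj.
by rewrite !cons_pathS.
Qed.

Lemma cons_path_admissible k v (A : {set V}) (q : {ffun 'I_k.+1 -> V}) :
  [&& cons_path v q ord0 == v, injectiveb (cons_path v q) &
      [forall i, cons_path v q i \notin A]] ->
  [&& q ord0 \notin A, q ord0 != v, injectiveb q & [forall i, q i \notin v |: A]].
Proof.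
move=> /and3P[_ /injectiveP vq_inj /forallP vq_notA].
have q_neq_v j : q j != v.
  by rewrite -(cons_path0 v q) -(cons_pathS v q) (inj_eq vq_inj) eq_sym neq_lift.
have q_notA j : q j \notin A by rewrite -(cons_pathS v q) vq_notA.
rewrite q_notA q_neq_v /=; apply/andP; split.
  by apply/injectiveP => i j; rewrite -!(cons_pathS v q) => /vq_inj/lift_inj.
by apply/forallP => j; rewrite in_setU1 negb_or q_neq_v q_notA.
Qed.

Lemma path_sum_cons k v A : v \notin A ->
  path_sum k.+1 v A <=
  \sum_(w | (w \notin A) && (w != v)) mu [set v; w] * path_sum k w (v |: A).
Proof.
move=> vA; rewrite /path_sum.
rewrite (reindex_onto (cons_path v) (fun p => [ffun j => p (lift ord0 j)])); last first.
  by move=> p /and3P[/eqP p0 _ _]; exact: cons_pathK.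
rewrite (partition_big (fun q : {ffun 'I_k.+1 -> V} => q ord0)
  (fun w => (w \notin A) && (w != v))); last first.
  by move=> q /andP[/cons_path_admissible /and4P[-> -> _ _] _].
apply: ler_sum => w /andP[wA wv]; rewrite mulr_sumr.
under eq_bigr => q /andP[_ /eqP q0] do rewrite prod_path_edge_cons q0.
apply: sub_ler_sum.
  by move=> q /andP[/andP[/cons_path_admissible /and4P[_ _ -> ->] _] ->].
move=> q /and3P[_ /injectiveP q_inj _].
by rewrite mulr_ge0 ?prod_path_edge_ge0 ?mu_ge0 ?is_edge_set2.
Qed.

Lemma sum_star (v : V) (P : pred V) :
  \sum_(w | P w && (w != v)) mu [set v; w] =
  \sum_(e in [set [set v; w] | w in [pred w | P w && (w != v)]]) mu e.
Proof.
rewrite big_imset /=; first exact: eq_bigl.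
move=> w1 w2; rewrite !inE => /andP[_ w1v] /andP[_ _] e12.
have := set22 v w1; rewrite e12 in_set2 => /orP[/eqP w1_eq_v|/eqP //].
by rewrite w1_eq_v eqxx in w1v.
Qed.

Lemma mem_star_edges (v : V) (e : {set V}) :
  (e \in [set [set v; w] | w in [pred w | predT w && (w != v)]]) = is_edge e && (v \in e).
Proof.
apply/imsetP/andP => [[w wv ->]|[/cards2P[a [b [ab ->]]]]].
  by rewrite inE /= in wv; rewrite is_edge_set2 // set21.
rewrite in_set2 => /orP[]/eqP->; first by exists b; rewrite // inE /= eq_sym.
by exists a; rewrite 1?setUC // inE.
Qed.

Lemma edge_mass_split v A : v \notin A ->
  \sum_(w | (w \notin A) && (w != v)) mu [set v; w] + edge_mass (v |: A) <= edge_mass A.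
Proof.
move=> vA; rewrite /edge_mass [X in _ <= X](bigID (fun e : {set V} => v \in e)) /=.
apply: lerD; rewrite ?(sum_star v (fun w => w \notin A)); apply: sub_ler_sum.
- move=> e /imsetP[w]; rewrite inE => /andP[wA wv] ->.
  rewrite is_edge_set2 // set21 andbT.
  by apply/forallP => u; apply/implyP; rewrite in_set2 => /orP[]/eqP->.
- by move=> e /andP[/andP[/mu_ge0]].
- move=> e /andP[-> /forallP e_notvA] /=; apply/andP; split.
    apply/forallP => u; apply/implyP => ue.
    by move: (e_notvA u); rewrite ue in_setU1 negb_or => /andP[].
  by apply/negP => ve; move: (e_notvA v); rewrite ve in_setU1 eqxx.
- by move=> e /andP[/andP[/mu_ge0]].
Qed.

Lemma path_sum_le k v A : v \notin A -> path_sum k v A <= (edge_mass A / k%:R) ^+ k.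
Proof.
elim: k v A => [|k IHk] v A vA; first by rewrite expr0 path_sum0_le1.
apply: le_trans (path_sum_cons k vA) _.
set c := (edge_mass (v |: A) / k%:R) ^+ k.
have star_ge0 : 0 <= \sum_(w | (w \notin A) && (w != v)) mu [set v; w].
  by apply: sumr_ge0 => w /andP[_ wv]; rewrite mu_ge0 ?is_edge_set2.
apply: le_trans (_ : \sum_(w | (w \notin A) && (w != v)) mu [set v; w] * c <= _).
  apply: ler_sum => w /andP[wA wv]; rewrite ler_wpM2l ?mu_ge0 ?is_edge_set2 //.
  by apply: IHk; rewrite in_setU1 negb_or wv.
rewrite -mulr_suml; apply: le_trans (AGM_step k star_ge0 (edge_mass_ge0 _)) _.
rewrite lerXn2r ?nnegrE ?divr_ge0 ?addr_ge0 ?edge_mass_ge0 ?ler0n //.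
by rewrite ler_pM2r ?invr_gt0 ?ltr0n // edge_mass_split.
Qed.

End PathSums.

Definition reweight (R : realType) (V : finType) (mu : {set V} -> R) (x : V) (a s : R)
  (e : {set V}) : R := (if x \in e then a else s) * mu e.

Lemma wt_reweight (R : realType) (V : finType) (mu : {set V} -> R) x a s F :
  wt (reweight mu x a s) F = a ^+ deg x F * s ^+ (#|F| - deg x F) * wt mu F.
Proof.
rewrite /wt /reweight big_split /= (bigID (fun e : {set V} => x \in e)) /=.
have cardFx : (#|F| - deg x F)%N = #|[set e in F | x \notin e]|.
  rewrite /deg -(cardsID [set e : {set V} | x \in e] F).
  have -> : F :&: [set e : {set V} | x \in e] = [set e in F | x \in e]
    by apply/setP => e; rewrite !inE.
  by rewrite addKn; apply: eq_card => e; rewrite !inE andbC.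
rewrite cardFx /deg -!prodr_const.
congr (_ * _ * _); apply: eq_big => [e|e]; rewrite ?inE //.
- by case/andP=> _ ->.
- by case/andP=> _ /negbTE->.
Qed.

Section ObjectiveExpansion.
Variables (R : realType) (V : finType) (m : nat).
Hypothesis m_ge3 : (3 <= m)%N.

Definition obj_coef (F : {set {set V}}) : R :=
  (2 * m)%:R * (is_cycle_edges m F)%:R + (is_path_edges m F)%:R.

Lemma objectiveE (nu : {set V} -> R) :
  objective m nu = \sum_F obj_coef F * wt nu F.
Proof.
rewrite /objective /beta_cycle /beta_path !(big_mkcond (is_cycle_edges m))
  !(big_mkcond (is_path_edges m)) mulr_sumr -big_split /=.
apply: eq_bigr => F _; rewrite /obj_coef mulrDl -mulrA.
by case: (is_cycle_edges m F); case: (is_path_edges m F); rewrite ?mul1r ?mul0r ?mulr0.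
Qed.

Lemma obj_coef_ge0 F : 0 <= obj_coef F.
Proof. by rewrite addr_ge0 ?mulr_ge0. Qed.

Lemma obj_coef_support F : obj_coef F != 0 ->
  #|F| = m /\ {in F, forall e, is_edge e}.
Proof.
rewrite /obj_coef; case: (boolP (is_cycle_edges m F)) => [/existsP[c]|_].
  move=> /andP[/injectiveP c_inj /eqP->] _; split; first exact: card_cycle_edges.
  by move=> e /imsetP[i _ ->]; exact: cycle_edge_is_edge.
case: (boolP (is_path_edges m F)) => [/existsP[p]|_]; last by rewrite mulr0 addr0 eqxx.
move=> /andP[/injectiveP p_inj /eqP->] _; split; first exact: card_path_edges.
by move=> e /imsetP[i _ ->]; exact: path_edge_is_edge.
Qed.

Lemma obj_term_ge0 (nu : {set V} -> R) F : (forall e, is_edge e -> 0 <= nu e) ->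
  0 <= obj_coef F * wt nu F.
Proof.
move=> nu_ge0; have [->|/obj_coef_support[_ F_edges]] := eqVneq (obj_coef F) 0.
  by rewrite mul0r.
by rewrite mulr_ge0 ?obj_coef_ge0 // prodr_ge0 // => e /F_edges/nu_ge0.
Qed.

End ObjectiveExpansion.

Section LeafPaths.
Variables (R : realType) (V : finType) (mu : {set V} -> R).
Hypothesis mu_ge0 : forall e, is_edge e -> 0 <= mu e.

Lemma wt_path_edges m (p : 'I_m.+1 -> V) : injective p ->
  wt mu [set path_edge p i | i : 'I_m] = \prod_(i < m) mu (path_edge p i).
Proof.
move=> p_inj; rewrite /wt big_imset /=; first exact: eq_bigl.
by move=> i j _ _; exact: path_edge_inj.
Qed.

(* A path with x as an endpoint is enumerated by [path_sum] starting from x. *)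
Lemma sum_leaf_paths_le m (x : V) :
  \sum_(F | is_path_edges m F && (deg x F == 1%N)) wt mu F <= path_sum mu m x set0.
Proof.
pose adm (p : {ffun 'I_m.+1 -> V}) :=
  [&& p ord0 == x, injectiveb p & [forall i, p i \notin (set0 : {set V})]].
have adm_ge0 p : adm p -> 0 <= \prod_(i < m) mu (path_edge p i).
  by case/and3P=> _ /injectiveP /(prod_path_edge_ge0 mu_ge0).
rewrite /path_sum.
rewrite (partition_big (fun p : {ffun _} => [set path_edge p i | i : 'I_m]) predT) //=.
rewrite [X in _ <= X](bigID (fun F => is_path_edges m F && (deg x F == 1%N))) /=.
apply: ler_wpDr; first by apply: sumr_ge0 => F _; apply: sumr_ge0 => p /andP[/adm_ge0].
apply: ler_sum => F /andP[pathF /eqP deg1].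
have [q q_inj [q0 ->]] := path_from_leaf pathF deg1.
have adm_q : adm q && ([set path_edge q i | i : 'I_m] == [set path_edge q i | i : 'I_m]).
  rewrite eqxx andbT /adm q0 eqxx; apply/and3P; split=> //; first exact/injectiveP.
  by apply/forallP => i; rewrite in_set0.
rewrite (bigD1 q adm_q) /= wt_path_edges // lerDl.
by apply: sumr_ge0 => p /andP[/andP[/adm_ge0]].
Qed.

End LeafPaths.

Section OptimalWeighting.
Variables (R : realType) (V : finType) (m : nat) (mu : {set V} -> R) (x : V).
Hypotheses (m_ge3 : (3 <= m)%N) (mu_simplex : in_simplex mu).
Hypothesis mu_opt :
  forall nu : {set V} -> R, in_simplex nu -> objective m nu <= objective m mu.

Let mu_ge0 : forall e, is_edge e -> 0 <= mu e := mu_simplex.1.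
Local Notation O := (objective m mu).
Local Notation b := (mubar mu x).
Local Notation contrib F := (obj_coef R m F * wt mu F).

Lemma contrib_ge0 F : 0 <= contrib F.
Proof. exact: obj_term_ge0. Qed.

Lemma sum_edges_at : \sum_(e | is_edge e && (x \in e)) mu e = b.
Proof.
rewrite /mubar (eq_bigl (fun y => predT y && (y != x))) // (sum_star mu x predT).
by apply: eq_bigl => e; rewrite mem_star_edges.
Qed.

Lemma sum_edges_off : \sum_(e | is_edge e && (x \notin e)) mu e = 1 - b.
Proof.
rewrite -[in RHS]mu_simplex.2 [in RHS](bigID (fun e : {set V} => x \in e)) /=.
by rewrite sum_edges_at addrC addrK.
Qed.

Lemma mubar_ge0 : 0 <= b.
Proof. by rewrite -sum_edges_at sumr_ge0 // => e /andP[/mu_ge0]. Qed.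

Lemma mubar_le1 : b <= 1.
Proof. by rewrite -subr_ge0 -sum_edges_off sumr_ge0 // => e /andP[/mu_ge0]. Qed.

Lemma reweight_in_simplex a s : 0 <= a -> 0 <= s -> a * b + s * (1 - b) = 1 ->
  in_simplex (reweight mu x a s).
Proof.
move=> a_ge0 s_ge0 abs; split=> [e e_edge|].
  by rewrite mulr_ge0 ?mu_ge0 //; case: (x \in e).
rewrite /reweight (bigID (fun e : {set V} => x \in e)) /=.
rewrite (eq_bigr (fun e => a * mu e)) => [|e /andP[_ ->] //].
rewrite [X in _ + X](eq_bigr (fun e => s * mu e)) => [|e /andP[_ /negbTE->] //].
by rewrite -!mulr_sumr sum_edges_at sum_edges_off.
Qed.

Lemma objective_reweight a s :
  objective m (reweight mu x a s) =
  \sum_F contrib F * (a ^+ deg x F * s ^+ (m - deg x F)).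
Proof.
rewrite objectiveE; apply: eq_bigr => F _; rewrite wt_reweight.
have [->|/(obj_coef_support m_ge3)[cardF _]] := eqVneq (obj_coef R m F) 0.
  by rewrite !mul0r.
by rewrite cardF mulrCA mulrC.
Qed.

(* Moving all weight off the edges at x keeps only the subgraphs avoiding x. *)
Lemma contrib_avoiding_le : b < 1 ->
  \sum_F contrib F * (deg x F == 0%N)%:R <= (1 - b) ^+ m * O.
Proof.
move=> b_lt1; have b'_gt0 : 0 < 1 - b by rewrite subr_gt0.
pose s := (1 - b)^-1.
have : objective m (reweight mu x 0 s) <= O.
  apply/mu_opt/reweight_in_simplex => //; first by rewrite invr_ge0 ltW.
  by rewrite mul0r add0r mulVf ?gt_eqF.
move=> /(ler_wpM2l (exprn_ge0 m (ltW b'_gt0))); apply: le_trans.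
rewrite objective_reweight mulr_sumr le_eqVlt; apply/orP; left; apply/eqP.
apply: eq_bigr => F _; rewrite expr0n; case: eqP => [->|_] /=; last by rewrite !(mulr0, mul0r).
by rewrite mul1r subn0 mulr1 mulrCA -exprMn mulfV ?gt_eqF // expr1n mulr1.
Qed.

Lemma contrib_reweight_ge (t : R) F : 0 < t <= 1 ->
  contrib F * (1 + t * ((deg x F)%:R - m%:R * b)
               - t ^+ 2 * ((deg x F)%:R * (m - deg x F)%:R * (b * (1 - b))))
  <= contrib F * ((1 + t * (1 - b)) ^+ deg x F * (1 - t * b) ^+ (m - deg x F)).
Proof.
move=> /andP[t_gt0 t_le1]; have b_ge0 := mubar_ge0; have b_le1 := mubar_le1.
have [->|/(obj_coef_support m_ge3)[cardF _]] := eqVneq (obj_coef R m F) 0.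
  by rewrite !mul0r.
rewrite ler_wpM2l ?contrib_ge0 //.
have deg_le_m : (deg x F <= m)%N by rewrite -cardF deg_le_card.
apply: le_trans (bernoulli_mul_ineq (deg x F) (m - deg x F) _ _); last 2 first.
- by rewrite mulr_ge0 ?subr_ge0 // ltW.
- by apply/andP; split; [rewrite mulr_ge0 // ltW | nra].
rewrite natrB // le_eqVlt; apply/orP; left; apply/eqP.
by move: (deg x F)%:R m%:R => d n; ring.
Qed.

(* First-order optimality for the perturbation that moves weight t * (1 - b)
   towards the edges at x. *)
Lemma contrib_deg_le : \sum_F contrib F * (deg x F)%:R <= m%:R * b * O.
Proof.
have b_ge0 := mubar_ge0; have b_le1 := mubar_le1.
pose Y F := contrib F * ((deg x F)%:R - m%:R * b).
pose Z F := contrib F * ((deg x F)%:R * (m - deg x F)%:R * (b * (1 - b))).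
have Z_ge0 : 0 <= \sum_F Z F.
  apply: sumr_ge0 => F _.
  by rewrite /Z mulr_ge0 ?contrib_ge0 // !mulr_ge0 ?ler0n ?subr_ge0.
suff : \sum_F Y F <= 0.
  rewrite /Y; under eq_bigr do rewrite mulrBr.
  by rewrite sumrB subr_le0 -mulr_suml -objectiveE (mulrC O).
apply: (le0_of_small_mul_ub ltr01 Z_ge0) => t t_gt0 t_le1.
have t01 : 0 < t <= 1 by rewrite t_gt0 t_le1.
have : objective m (reweight mu x (1 + t * (1 - b)) (1 - t * b)) <= O.
  apply/mu_opt/reweight_in_simplex.
  - by rewrite addr_ge0 ?mulr_ge0 ?subr_ge0 // ltW.
  - by rewrite subr_ge0; nra.
  - by move: (mubar mu x) => c; ring.
rewrite objective_reweight.
move=> /(le_trans (ler_sum _ (fun F _ => contrib_reweight_ge F t01))).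
under eq_bigr do
  rewrite mulrBr mulrDr mulr1 [_ * (t * _)]mulrCA [_ * (t ^+ 2 * _)]mulrCA.
rewrite sumrB big_split /= -!mulr_sumr -objectiveE /Y /Z => le_O.
by rewrite -(ler_pM2l t_gt0) mulrA -expr2; lra.
Qed.

Lemma one_le_deg_split (d : nat) :
  1 <= (d == 0%N)%:R + d%:R / 2 + (d == 1%N)%:R / 2 :> R.
Proof.
case: d => [|[|d]] /=; first by rewrite !mul0r !addr0.
  by rewrite add0r -mulrDl -natrD divff // pnatr_eq0.
by rewrite mul0r addr0 add0r ler_pdivlMr ?ltr0n // mul1r ler_nat.
Qed.

Lemma objective_le_deg_split :
  O <= \sum_F contrib F * (deg x F == 0%N)%:R
       + (\sum_F contrib F * (deg x F)%:R) / 2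
       + (\sum_F contrib F * (deg x F == 1%N)%:R) / 2.
Proof.
rewrite objectiveE !mulr_suml -!big_split /=; apply: ler_sum => F _.
rewrite -!mulrA -!mulrDr mulrA -[X in X <= _]mulr1.
by rewrite ler_wpM2l ?contrib_ge0 ?one_le_deg_split.
Qed.

Lemma contrib_leaf_le :
  \sum_F contrib F * (deg x F == 1%N)%:R <= path_sum mu m x set0.
Proof.
apply: le_trans (sum_leaf_paths_le mu_ge0 m x).
rewrite [X in _ <= X]big_mkcond le_eqVlt; apply/orP; left; apply/eqP/eq_bigr => F _.
case: eqP => [deg1|_]; last by rewrite andbF mulr0.
have /negbTE cycleF : ~~ is_cycle_edges m F.
  by apply/negP => /(deg_cycle_edges_neq1 x m_ge3); rewrite deg1.
rewrite /obj_coef cycleF andbT mulr0 add0r mulr1.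
by case: (is_path_edges m F); rewrite ?mul1r ?mul0r.
Qed.

Lemma edge_mass_set1 : edge_mass mu [set x] = 1 - b.
Proof.
rewrite -sum_edges_off; apply: eq_bigl => e; congr (_ && _).
apply/forall_inP/idP => [notx|xe u ue].
  by apply/negP => xe; move: (notx x xe); rewrite set11.
by rewrite in_set1; apply: contraNneq xe => <-.
Qed.

Lemma path_sum_from_le : path_sum mu m x set0 <= b * ((1 - b) / (m.-1)%:R) ^+ m.-1.
Proof.
have := path_sum_cons mu_ge0 m.-1 (negbT (in_set0 x)); rewrite prednK; last by lia.
move/le_trans; apply; rewrite setU0 /mubar mulr_suml.
rewrite (eq_bigl (fun w => w != x)) => [|w]; last by rewrite in_set0.
apply: ler_sum => w wx; rewrite ler_wpM2l ?mu_ge0 ?is_edge_set2 //.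
by rewrite -edge_mass_set1 path_sum_le // in_set1.
Qed.

(* The uniform weighting of an m-cycle is a competitor with positive objective. *)
Lemma objective_gt0 : (m <= #|V|)%N -> 0 < O.
Proof.
move=> m_le_V; pose c : {ffun 'I_m -> V} := [ffun i => enum_val (widen_ord m_le_V i)].
have c_inj : injective c.
  by move=> i j; rewrite !ffunE => /enum_val_inj/(congr1 val) /= ij; apply/val_inj.
pose C := [set cycle_edge c i | i : 'I_m].
have cycleC : is_cycle_edges m C.
  by apply/existsP; exists c; rewrite eqxx andbT; exact/injectiveP.
have m_gt0 : 0 < m%:R :> R by rewrite ltr0n; lia.
pose nu (e : {set V}) : R := if e \in C then m%:R^-1 else 0.
have nu_ge0 e : 0 <= nu e by rewrite /nu; case: ifP => _ //; rewrite invr_ge0 ltW.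
have nuC F : F \in C -> nu F = m%:R^-1 by rewrite /nu => ->.
have nu_simplex : in_simplex nu.
  split=> //; rewrite (bigID (fun e => e \in C)) /= [X in _ + X]big1 => [|e]; last first.
    by case/andP=> _ /negbTE eC; rewrite /nu eC.
  rewrite addr0 (eq_bigl (fun e => e \in C)) => [|e]; last first.
    apply/andP/idP => [[]//|eC]; split=> //.
    by case/imsetP: eC => i _ ->; exact: cycle_edge_is_edge.
  rewrite (eq_bigr _ nuC) sumr_const card_cycle_edges //.
  by rewrite -[_ *+ m]mulr_natr mulVf ?gt_eqF.
apply: lt_le_trans (mu_opt nu_simplex); rewrite objectiveE (bigD1 C) //=.
apply: ltr_pwDl; last by apply: sumr_ge0 => F _; exact: obj_term_ge0.
rewrite mulr_gt0 //; first by rewrite /obj_coef cycleC mulr1 -natrD ltr0n; lia.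
by rewrite /wt (eq_bigr _ nuC) prodr_const exprn_gt0 // invr_gt0.
Qed.

End OptimalWeighting.

Theorem lemma4p5 (R : realType) (V : finType) (m : nat)
  (hm : (3 <= m)%N) (hV : (m <= #|V|)%N) (mu : {set V} -> R) :
  in_simplex mu ->
  (forall nu : {set V} -> R, in_simplex nu -> objective m nu <= objective m mu) ->
  forall x : V,
    let O := objective m mu in
    let b := mubar mu x in
    1 <= m%:R / 2 * b + (1 - b) ^+ m
         + (2 * O)^-1 * b * ((1 - b) / (m.-1)%:R) ^+ m.-1.
Proof.
move=> mu_simplex mu_opt x /=.
have O_gt0 := objective_gt0 hm mu_opt hV.
have b_ge0 := mubar_ge0 x mu_simplex; have b_le1 := mubar_le1 x mu_simplex.
have [b_lt1|b_ge1] := ltP (mubar mu x) 1; last first.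
  have -> : mubar mu x = 1 by apply/eqP; rewrite eq_le b_le1.
  have m_neq0 : (m == 0%N) = false by apply/eqP; lia.
  have m1_neq0 : (m.-1 == 0%N) = false by apply/eqP; lia.
  rewrite subrr mul0r !expr0n /= m_neq0 m1_neq0 !mulr0 !addr0 mulr1.
  by rewrite ler_pdivlMr ?mul1r ?ler_nat //; lia.
have avoid := contrib_avoiding_le hm mu_simplex mu_opt b_lt1.
have degs := contrib_deg_le x hm mu_simplex mu_opt.
have deg_split := objective_le_deg_split x hm mu_simplex.
have leaf := le_trans (contrib_leaf_le x hm mu_simplex) (path_sum_from_le x hm mu_simplex).
set O := objective m mu in O_gt0 avoid degs deg_split *.
set b := mubar mu x in b_ge0 b_le1 avoid degs leaf *.
set q := (_ / _) ^+ m.-1 in leaf *.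
have key : O <= (1 - b) ^+ m * O + m%:R * b * O / 2 + b * q / 2 by lra.
rewrite -(ler_pM2r O_gt0) mul1r; apply: le_trans key _; clearbody O b q.
by rewrite le_eqVlt; apply/orP; left; apply/eqP; field; rewrite gt_eqF.
Qed.
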